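(* Let $\gamma,\delta$ be constants and $u_0,u_1$ nonzero constants. Let $\mathfrak p_n,\mathfrak q_n$ be the $7$-periodic integer sequences with $\mathfrak p_n=1$ if $n\equiv1$ or $5\pmod 7$ and $\mathfrak p_n=0$ otherwise, and $\mathfrak q_n=1$ if $n\equiv 0,3$ or $6\pmod 7$ and $\mathfrak q_n=0$ otherwise. Let $(d_n)_{n\in\mathbb Z}$ be a sequence of nonzero numbers satisfying the non-autonomous Somos-5 recurrence $$d_{n-3}d_{n+2}=\gamma_n\,d_{n-2}d_{n+1}+\delta_n\,d_{n-1}d_n,\qquad \gamma_n=\gamma\,u_0^{\mathfrak p_{n+1}}u_1^{\mathfrak p_{n-3}},\quad \delta_n=\delta\,u_0^{\mathfrak q_{n+1}}u_1^{\mathfrak q_{n-3}},$$ and let $(\eta_n)_{n\in\mathbb Z}$ be an integer sequence satisfying $\eta_{n+3}-\eta_{n+2}-\eta_{n+1}+\eta_n=\mathfrak p_n-\mathfrak q_n$ for all $n$. Define $$k_n=u_0^{\eta_{n+3}+\eta_n}u_1^{\eta_{n-1}+\eta_{n-4}}\,d_nd_{n-3},\qquad l_n=u_0^{\eta_{n+2}+\eta_{n+1}}u_1^{\eta_{n-2}+\eta_{n-3}}\,d_{n-1}d_{n-2}.$$ Then $(k_n,l_n)$ satisfies the system $$k_{n+1}k_{n-1}=\gamma\,k_nl_n+\delta\,l_n^2,\qquad l_{n+1}l_{n-1}=k_nl_n.$$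
   Context: This is the special case $a_1=a_3=0$, $a_2=1$, $a_5=\gamma$, $a_6=\delta$ of the system $k_{n+1}k_{n-1}=a_3k_n^2+a_5k_nl_n+a_6l_n^2$, $l_{n+1}l_{n-1}=a_1k_n^2+a_2k_nl_n+a_3l_n^2$. *)

From HB Require Import structures.
From mathcomp Require Import all_boot all_order all_algebra.
Set Implicit Arguments. Unset Strict Implicit. Unset Printing Implicit Defensive.
Import Order.TTheory GRing.Theory Num.Theory.
Local Open Scope ring_scope.

Definition frakp (n : int) : nat :=
  let r := (n %% 7)%Z in if (r == 1) || (r == 5) then 1%N else 0%N.

Definition frakq (n : int) : nat :=
  let r := (n %% 7)%Z in if [|| r == 0, r == 3 | r == 6] then 1%N else 0%N.

From HB Require Import structures.
From mathcomp Require Import all_boot all_order all_algebra.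
From mathcomp Require Import zify ring.
Set Implicit Arguments. Unset Strict Implicit. Unset Printing Implicit Defensive.
Import Order.TTheory GRing.Theory Num.Theory.
Local Open Scope ring_scope.

(* With K_n = d_n d_(n-3) and L_n = d_(n-1) d_(n-2), the Somos-5 recurrence at
   n - 1 is literally the non-autonomous system
     K_(n+1) K_(n-1) = gamma_(n-1) K_n L_n + delta_(n-1) L_n^2,
     L_(n+1) L_(n-1) = K_n L_n.
   Rescaling K_n by a_n = u0^(eta_(n+3)+eta_n) u1^(eta_(n-1)+eta_(n-4)) and L_n
   by b_n = u0^(eta_(n+2)+eta_(n+1)) u1^(eta_(n-2)+eta_(n-3)) absorbs the
   periodic parts of gamma_(n-1) and delta_(n-1).  The u1-part of each factor
   is the u0-part with eta shifted by 4, so everything reduces to linear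
   identities between exponents; these follow from the difference equation
   for eta and from p_(n-1) + p_n + p_(n+1) = q_(n-1) + q_(n+1), a check over
   one period modulo 7. *)

Section Gauge.
Variable R : comPzRingType.
Implicit Types (gamma delta : R) (c e a b k l d : int -> R) (n : int).

Definition kl_system c e k l n :=
  k (n + 1) * k (n - 1) = c n * k n * l n + e n * l n ^+ 2 /\
  l (n + 1) * l (n - 1) = k n * l n.

Definition gauge gamma delta c e a b n :=
  [/\ a (n + 1) * a (n - 1) * c n = gamma * a n * b n,
      a (n + 1) * a (n - 1) * e n = delta * b n ^+ 2 &
      b (n + 1) * b (n - 1) = a n * b n].

Lemma gauge_transform gamma delta c e a b k l n :
  kl_system c e k l n -> gauge gamma delta c e a b n ->
  kl_system (fun=> gamma) (fun=> delta)
    (fun m => a m * k m) (fun m => b m * l m) n.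
Proof.
move=> [kE lE] [acE aeE bE]; split => /=.
- transitivity (a (n + 1) * a (n - 1) * (k (n + 1) * k (n - 1))); first by ring.
  rewrite kE; transitivity (a (n + 1) * a (n - 1) * c n * k n * l n
                            + a (n + 1) * a (n - 1) * e n * l n ^+ 2); first by ring.
  by rewrite acE aeE; ring.
- transitivity (b (n + 1) * b (n - 1) * (l (n + 1) * l (n - 1))); first by ring.
  by rewrite bE lE; ring.
Qed.

Lemma gauge_mul gamma delta c0 e0 a0 b0 c1 e1 a1 b1 n :
  gauge 1 1 c0 e0 a0 b0 n -> gauge 1 1 c1 e1 a1 b1 n ->
  gauge gamma delta (fun m => gamma * c0 m * c1 m) (fun m => delta * e0 m * e1 m)
    (fun m => a0 m * a1 m) (fun m => b0 m * b1 m) n.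
Proof.
move=> [c0E e0E b0E] [c1E e1E b1E]; split.
- transitivity (gamma * (a0 (n + 1) * a0 (n - 1) * c0 n)
                      * (a1 (n + 1) * a1 (n - 1) * c1 n)); first by ring.
  by rewrite c0E c1E; ring.
- transitivity (delta * (a0 (n + 1) * a0 (n - 1) * e0 n)
                      * (a1 (n + 1) * a1 (n - 1) * e1 n)); first by ring.
  by rewrite e0E e1E; ring.
- transitivity (b0 (n + 1) * b0 (n - 1) * (b1 (n + 1) * b1 (n - 1))); first by ring.
  by rewrite b0E b1E; ring.
Qed.

Definition somos_K d n := d n * d (n - 3).
Definition somos_L d n := d (n - 1) * d (n - 2).

Lemma somos5_kl_system c e d n :
  d (n - 4) * d (n + 1) = c n * d (n - 3) * d n + e n * d (n - 2) * d (n - 1) ->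
  kl_system c e (somos_K d) (somos_L d) n.
Proof.
move=> rec.
have KS : somos_K d (n + 1) = d (n + 1) * d (n - 2) by rewrite /somos_K -addrA.
have KP : somos_K d (n - 1) = d (n - 1) * d (n - 4) by rewrite /somos_K -addrA.
have LS : somos_L d (n + 1) = d n * d (n - 1) by rewrite /somos_L addrK -addrA.
have LP : somos_L d (n - 1) = d (n - 2) * d (n - 3) by rewrite /somos_L -!addrA.
rewrite /kl_system KS KP LS LP /somos_K /somos_L; split; last by ring.
transitivity (d (n - 1) * d (n - 2) * (d (n - 4) * d (n + 1))); first by ring.
by rewrite rec; ring.
Qed.

End Gauge.

Section Exponents.
Implicit Types (eta : int -> int) (n j : int).

Definition kexp eta n := eta (n + 3) + eta n.
Definition lexp eta n := eta (n + 2) + eta (n + 1).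

Lemma kexp_shift eta j n : kexp (fun m => eta (m + j)) n = kexp eta (n + j).
Proof. by rewrite /kexp addrAC. Qed.

Lemma lexp_shift eta j n : lexp (fun m => eta (m + j)) n = lexp eta (n + j).
Proof. by rewrite /lexp addrAC [n + 1 + j]addrAC. Qed.

Lemma kexp_succ eta n : kexp eta (n + 1) = eta (n + 4) + eta (n + 1).
Proof. by rewrite /kexp -addrA. Qed.

Lemma kexp_pred eta n : kexp eta (n - 1) = eta (n + 2) + eta (n - 1).
Proof. by rewrite /kexp -addrA. Qed.

Lemma lexp_succ eta n : lexp eta (n + 1) = eta (n + 3) + eta (n + 2).
Proof. by rewrite /lexp -!addrA. Qed.

Lemma lexp_pred eta n : lexp eta (n - 1) = eta (n + 1) + eta n.
Proof. by rewrite /lexp -addrA subrK. Qed.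

Lemma lexp_rec eta n : lexp eta (n + 1) + lexp eta (n - 1) = kexp eta n + lexp eta n.
Proof. by rewrite lexp_succ lexp_pred /kexp /lexp; ring. Qed.

Variables (eta : int -> int) (p q : int -> nat).
Hypothesis eta_diff : forall n, kexp eta n - lexp eta n = (p n)%:Z - (q n)%:Z.
Hypothesis pq_balance : forall n,
  (p (n - 1))%:Z + (p n)%:Z + (p (n + 1))%:Z = (q (n - 1))%:Z + (q (n + 1))%:Z.

Lemma kexp_rec_p n : kexp eta (n + 1) + kexp eta (n - 1) + (p n)%:Z = kexp eta n + lexp eta n.
Proof.
move: (eta_diff (n + 1)) (eta_diff (n - 1)) (pq_balance n).
by rewrite kexp_succ lexp_succ kexp_pred lexp_pred /kexp /lexp; lia.
Qed.

Lemma kexp_rec_q n : kexp eta (n + 1) + kexp eta (n - 1) + (q n)%:Z = lexp eta n + lexp eta n.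
Proof. by move: (kexp_rec_p n) (eta_diff n); lia. Qed.

Lemma eta_diff_shift j n :
  kexp (fun m => eta (m + j)) n - lexp (fun m => eta (m + j)) n
  = (p (n + j))%:Z - (q (n + j))%:Z.
Proof. by rewrite kexp_shift lexp_shift. Qed.

Lemma pq_balance_shift j n :
  (p (n - 1 + j))%:Z + (p (n + j))%:Z + (p (n + 1 + j))%:Z
  = (q (n - 1 + j))%:Z + (q (n + 1 + j))%:Z.
Proof. by rewrite !(addrAC n _ j). Qed.

Lemma gauge_monomial (F : fieldType) (x : F) n : x != 0 ->
  gauge 1 1 (fun m => x ^+ p m) (fun m => x ^+ q m)
    (fun m => x ^ kexp eta m) (fun m => x ^ lexp eta m) n.
Proof.
move=> x_neq0; split; rewrite ?mul1r ?expr2 ?exprnP -!expfzDr //; congr (x ^ _).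
- exact: kexp_rec_p.
- exact: kexp_rec_q.
- exact: lexp_rec.
Qed.

End Exponents.

Lemma frak_balance n :
  (frakp (n - 1))%:Z + (frakp n)%:Z + (frakp (n + 1))%:Z
  = (frakq (n - 1))%:Z + (frakq (n + 1))%:Z.
Proof.
rewrite /frakp /frakq -(modzDml n 1) -(modzDml n (-1)).
have : (n %% 7)%Z < 7 by rewrite ltz_pmod.
have : 0 <= (n %% 7)%Z by rewrite modz_ge0.
case: (n %% 7)%Z => [r|r] // _.
by do 7! case: r => [|r] //.
Qed.

Theorem theorem5 (F : fieldType) (gamma delta u0 u1 : F)
    (d : int -> F) (eta : int -> int) :
  u0 != 0 -> u1 != 0 ->
  (forall n : int, d n != 0) ->
  (forall n : int,
      d (n - 3) * d (n + 2) =
        (gamma * u0 ^+ frakp (n + 1) * u1 ^+ frakp (n - 3)) * d (n - 2) * d (n + 1)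
      + (delta * u0 ^+ frakq (n + 1) * u1 ^+ frakq (n - 3)) * d (n - 1) * d n) ->
  (forall n : int,
      eta (n + 3) - eta (n + 2) - eta (n + 1) + eta n
        = (frakp n)%:Z - (frakq n)%:Z) ->
  let k := fun n : int =>
    u0 ^ (eta (n + 3) + eta n) * u1 ^ (eta (n - 1) + eta (n - 4)) * d n * d (n - 3) in
  let l := fun n : int =>
    u0 ^ (eta (n + 2) + eta (n + 1)) * u1 ^ (eta (n - 2) + eta (n - 3)) * d (n - 1) * d (n - 2) in
  forall n : int,
    k (n + 1) * k (n - 1) = gamma * k n * l n + delta * l n ^+ 2 /\
    l (n + 1) * l (n - 1) = k n * l n.
Proof.
(* The identities are polynomial in d, so d need not be nonvanishing. *)
move=> u0_neq0 u1_neq0 _ rec eta_rec k l n.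
have eta_diff m : kexp eta m - lexp eta m = (frakp m)%:Z - (frakq m)%:Z.
  by rewrite -eta_rec /kexp /lexp; ring.
have rec_pred : d (n - 4) * d (n + 1) =
    gamma * u0 ^+ frakp n * u1 ^+ frakp (n - 4) * d (n - 3) * d n
  + delta * u0 ^+ frakq n * u1 ^+ frakq (n - 4) * d (n - 2) * d (n - 1).
  by move: (rec (n - 1)); rewrite subrK -!addrA.
pose a m := u0 ^ kexp eta m * u1 ^ kexp (fun i => eta (i - 4)) m.
pose b m := u0 ^ lexp eta m * u1 ^ lexp (fun i => eta (i - 4)) m.
have kE m : k m = a m * somos_K d m by rewrite /k /a /kexp /somos_K -addrA mulrA.
have lE m : l m = b m * somos_L d m by rewrite /l /b /lexp /somos_L -!addrA mulrA.
rewrite !kE !lE.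
exact: gauge_transform (somos5_kl_system rec_pred)
  (gauge_mul gamma delta (gauge_monomial eta_diff frak_balance n u0_neq0)
     (gauge_monomial (eta_diff_shift eta_diff (-4)) (pq_balance_shift frak_balance (-4))
        n u1_neq0)).
Qed.
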